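(* Let $(x,y,p)$ be an optimal solution of the RMP with optimal value $z^{\mathit{RMP}}$ and let $(\alpha,\beta,\gamma,\delta,\mu,\phi,\psi)$ be an optimal solution of the DRMP, with characteristic lifting $(\alpha,\check\beta,\gamma,\check\delta,\mu,\phi,\psi)$. Define $$\bar c^*_b:=-\Bigl(\min_{l\in L(b),\,m\in\mathcal M}\bar c_{b,l,m}\Bigr)^-\le 0\quad(b\in\mathcal B),$$ $$\bar d^*:=-\Bigl(\min_{l\in\mathcal L\setminus\bigcap_{b\in\mathcal B}L(b)}\Bigl(-\sum_{b\in\mathcal B}\check\beta_{b,l}+\check\delta_l+\gamma-\chi_l\mu\Bigr)\Bigr)^-\le 0$$ (with $\bar d^*:=0$ if the index set is empty, and with the convention that a minimum over an empty set is $+\infty$), and the lower-bound shift $\tilde\alpha_b:=\alpha_b+\bar c^*_b$, $\tilde\beta:=\check\beta$, $\tilde\gamma:=\gamma-\bar d^*$, $\tilde\delta:=\check\delta$, $\tilde\mu:=\mu$, $\tilde\phi:=\phi$, $\tilde\psi:=\psi$. Then $(\tilde\alpha,\tilde\beta,\tilde\gamma,\tilde\delta,\tilde\mu,\tilde\phi,\tilde\psi)$ is feasible for the DMP, and its DMP objective value equals $z^{\mathit{RMP}}+\sum_{b\in\mathcal B}\bar c^*_b+k\bar d^*$. Consequently the optimal value $z^{\mathit{MP}}$ of the MP satisfies $$z^{\mathit{MP}}\ \ge\ z^{\mathit{RMP}}+\sum_{b\in\mathcal B}\bar c^*_b+k\,\bar d^*.$$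
   Context: Let $\mathcal B$ (branches) and $\mathcal S$ (sizes) be finite nonempty sets, $\mathcal M\subset\mathbb N$ a finite nonempty set of multiplicities, and $\mathcal L\subset\mathbb N^{\mathcal S}$ a finite nonempty set of lot-types; for $l\in\mathcal L$ write $|l|:=\sum_{s\in\mathcal S}l_s$. Let costs $c_{b,l,m}\ge 0$ ($b\in\mathcal B,l\in\mathcal L,m\in\mathcal M$), an integer $k\ge 0$, reals $\underline I\le\overline I$ and a constant $P>0$ be given. Let $\mathcal L''\subseteq\mathcal L'\subseteq\mathcal L$, for each $b\in\mathcal B$ let $L(b)\subseteq\mathcal L'$, and for each $b$ and $l\in L(b)$ let $M(b,l)\subseteq\mathcal M$ be nonempty. Put $\chi_l:=1$ if $l\notin\mathcal L''$ and $\chi_l:=0$ if $l\in\mathcal L''$. For real $t$, $(t)^+:=\max\{t,0\}$ and $(t)^-:=\max\{-t,0\}$. Master problem (MP): the linear program in variables $x_{b,l,m}\ge0$ ($b\in\mathcal B,l\in\mathcal L,m\in\mathcal M$), $y_l\ge0$ ($l\in\mathcal L$), $p\ge 0$: minimize $\sum_{b,l,m}c_{b,l,m}x_{b,l,m}+Pp$ subject to ($\alpha_b$) $\sum_{l,m}x_{b,l,m}=1$ for all $b$; ($\beta_{b,l}$) $y_l-\sum_m x_{b,l,m}\ge 0$ for all $b,l$; ($\gamma$) $-\sum_l y_l\ge -k$; ($\delta_l$) $\sum_{b,m}x_{b,l,m}-y_l\ge0$ for all $l$; ($\mu$) $\sum_{l\in\mathcal L\setminus\mathcal L''}y_l+p\ge1$;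 ($\phi$) $\sum_{b,l,m}m|l|x_{b,l,m}\ge\underline I$; ($\psi$) $-\sum_{b,l,m}m|l|x_{b,l,m}\ge-\overline I$. The symbol in parentheses names the dual variable of each constraint. Restricted master problem (RMP): the same LP but containing only the variables $x_{b,l,m}$ with $l\in L(b)$, $m\in M(b,l)$, the variables $y_l$ with $l\in\mathcal L'$, and $p$; only the $\beta_{b,l}$-constraints with $l\in L(b)$ and the $\delta_l$-constraints with $l\in\mathcal L'$ are kept, and all sums are restricted to the present variables. Dual master problem (DMP): variables $\alpha_b\in\mathbb R$, $\beta_{b,l}\ge0$ (all $b\in\mathcal B,l\in\mathcal L$), $\gamma\ge0$, $\delta_l\ge0$ (all $l\in\mathcal L$), $\mu\ge0$, $\phi,\psi\ge0$; maximize $\sum_b\alpha_b-k\gamma+\underline I\phi-\overline I\psi+\mu$ subject to the $x$-constraints $\alpha_b-\beta_{b,l}+\delta_l+m|l|(\phi-\psi)\le c_{b,l,m}$ for all $b,l,m$, the $y$-constraints $\sum_{b\in\mathcal B}\beta_{b,l}-\gamma-\delta_l+\chi_l\mu\le 0$ for all $l\in\mathcal L$, and the $p$-constraint $\mu\le P$. The dual restricted master problem (DRMP) is the LP dual of the RMP: variables $\alpha_b$, $\beta_{b,l}$ ($l\in L(b)$), $\gamma$, $\delta_l$ ($l\in\mathcal L'$), $\mu,\phi,\psi$ with the same sign conditions and objective, $x$-constraints only for $l\in L(b)$, $m\in M(b,l)$, $y$-constraints $\sum_{b:\,l\in L(b)}\beta_{b,l}-\gamma-\delta_l+\chi_l\mu\le0$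 for $l\in\mathcal L'$, and $\mu\le P$. Given a DRMP solution $(\alpha,\beta,\gamma,\delta,\mu,\phi,\psi)$: its canonical lifting sets $\bar\beta_{b,l}:=\beta_{b,l}$ if $l\in L(b)$ and $0$ otherwise, $\bar\delta_l:=\delta_l$ if $l\in\mathcal L'$ and $0$ otherwise. The (uncompensated) reduced cost is $\bar c_{b,l,m}:=c_{b,l,m}-\alpha_b+\bar\beta_{b,l}-\bar\delta_l-m|l|(\phi-\psi)$ for all $b\in\mathcal B,l\in\mathcal L,m\in\mathcal M$. The characteristic lifting is $(\alpha,\check\beta,\gamma,\check\delta,\mu,\phi,\psi)$ with $\check\beta_{b,l}:=\beta_{b,l}$ if $l\in L(b)$ and $\check\beta_{b,l}:=(\min_{m\in\mathcal M}\bar c_{b,l,m})^-$ if $l\in\mathcal L\setminus L(b)$; $\check\delta_l:=\delta_l$ if $l\in\mathcal L'$ and $\check\delta_l:=(\min_{b\in\mathcal B,m\in\mathcal M}\bar c_{b,l,m})^+$ if $l\in\mathcal L\setminus\mathcal L'$. *)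

From HB Require Import structures.
From mathcomp Require Import all_boot all_order all_algebra.
Set Implicit Arguments. Unset Strict Implicit. Unset Printing Implicit Defensive.
Import Order.TTheory GRing.Theory Num.Theory.
Local Open Scope ring_scope.

Section Defs.
Variable R : realFieldType.
(* B = branches, S = sizes, Mt = index type of multiplicities, Lt = index type
   of lot-types. *)
Variables B S Mt Lt : finType.

(* Problem data. mval m is the multiplicity (a natural number) named by m,
   lot l is the lot-type (a vector in N^S) named by l. *)
Record data := Data {
  mval : Mt -> nat;
  lot : Lt -> {ffun S -> nat};
  cost : B -> Lt -> Mt -> R;
  kk : nat;
  Ilo : R;
  Ihi : R;
  Pen : R;
  Lpp : {set Lt};
  Lp : {set Lt};
  Lb : B -> {set Lt};
  Mb : B -> Lt -> {set Mt}
}.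

Variable D : data.

Definition lsize (l : Lt) : nat := (\sum_(s : S) lot D l s)%N.
Definition coef (l : Lt) (m : Mt) : R := (mval D m * lsize l)%:R.
Definition chi (l : Lt) : R := if l \in Lpp D then 0 else 1.

Definition MP_I (x : B -> Lt -> Mt -> R) : R :=
  \sum_(b : B) \sum_(l : Lt) \sum_(m : Mt) coef l m * x b l m.

Definition MP_feasible (x : B -> Lt -> Mt -> R) (y : Lt -> R) (p : R) : Prop :=
  (forall b l m, 0 <= x b l m) /\ (forall l, 0 <= y l) /\ 0 <= p /\
  (forall b, \sum_(l : Lt) \sum_(m : Mt) x b l m = 1) /\
  (forall b l, 0 <= y l - \sum_(m : Mt) x b l m) /\
  - (kk D)%:R <= - \sum_(l : Lt) y l /\
  (forall l, 0 <= \sum_(b : B) \sum_(m : Mt) x b l m - y l) /\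
  1 <= \sum_(l | l \notin Lpp D) y l + p /\
  Ilo D <= MP_I x /\
  - Ihi D <= - MP_I x.

Definition MP_obj (x : B -> Lt -> Mt -> R) (p : R) : R :=
  \sum_(b : B) \sum_(l : Lt) \sum_(m : Mt) cost D b l m * x b l m + Pen D * p.

(* ---------------- Restricted master problem ----------------
   Variables are given as total functions, but only the entries x b l m with
   l \in L(b), m \in M(b,l), and y l with l \in L' occur in the RMP. *)
Definition RMP_I (x : B -> Lt -> Mt -> R) : R :=
  \sum_(b : B) \sum_(l in Lb D b) \sum_(m in Mb D b l) coef l m * x b l m.

Definition RMP_feasible (x : B -> Lt -> Mt -> R) (y : Lt -> R) (p : R) : Prop :=
  (forall b l m, l \in Lb D b -> m \in Mb D b l -> 0 <= x b l m) /\
  (forall l, l \in Lp D -> 0 <= y l) /\ 0 <= p /\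
  (forall b, \sum_(l in Lb D b) \sum_(m in Mb D b l) x b l m = 1) /\
  (forall b l, l \in Lb D b -> 0 <= y l - \sum_(m in Mb D b l) x b l m) /\
  - (kk D)%:R <= - \sum_(l in Lp D) y l /\
  (forall l, l \in Lp D ->
     0 <= \sum_(b : B | l \in Lb D b) \sum_(m in Mb D b l) x b l m - y l) /\
  1 <= \sum_(l in Lp D :\: Lpp D) y l + p /\
  Ilo D <= RMP_I x /\
  - Ihi D <= - RMP_I x.

Definition RMP_obj (x : B -> Lt -> Mt -> R) (p : R) : R :=
  \sum_(b : B) \sum_(l in Lb D b) \sum_(m in Mb D b l) cost D b l m * x b l m
  + Pen D * p.

Definition RMP_optimal (x : B -> Lt -> Mt -> R) (y : Lt -> R) (p : R) : Prop :=
  RMP_feasible x y p /\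
  forall x' y' p', RMP_feasible x' y' p' -> RMP_obj x p <= RMP_obj x' p'.

Definition dual_obj (al : B -> R) (ga mu ph ps : R) : R :=
  \sum_(b : B) al b - (kk D)%:R * ga + Ilo D * ph - Ihi D * ps + mu.

Definition DMP_feasible (al : B -> R) (be : B -> Lt -> R) (ga : R)
    (de : Lt -> R) (mu ph ps : R) : Prop :=
  (forall b l, 0 <= be b l) /\ 0 <= ga /\ (forall l, 0 <= de l) /\
  0 <= mu /\ 0 <= ph /\ 0 <= ps /\
  (forall b l m, al b - be b l + de l + coef l m * (ph - ps) <= cost D b l m) /\
  (forall l, \sum_(b : B) be b l - ga - de l + chi l * mu <= 0) /\
  mu <= Pen D.

(* Dual of the RMP: only be b l with l \in L(b) and de l with l \in L' occur. *)
Definition DRMP_feasible (al : B -> R) (be : B -> Lt -> R) (ga : R)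
    (de : Lt -> R) (mu ph ps : R) : Prop :=
  (forall b l, l \in Lb D b -> 0 <= be b l) /\ 0 <= ga /\
  (forall l, l \in Lp D -> 0 <= de l) /\
  0 <= mu /\ 0 <= ph /\ 0 <= ps /\
  (forall b l m, l \in Lb D b -> m \in Mb D b l ->
     al b - be b l + de l + coef l m * (ph - ps) <= cost D b l m) /\
  (forall l, l \in Lp D ->
     \sum_(b : B | l \in Lb D b) be b l - ga - de l + chi l * mu <= 0) /\
  mu <= Pen D.

Definition DRMP_optimal (al : B -> R) (be : B -> Lt -> R) (ga : R)
    (de : Lt -> R) (mu ph ps : R) : Prop :=
  DRMP_feasible al be ga de mu ph ps /\
  forall al' be' ga' de' mu' ph' ps',
    DRMP_feasible al' be' ga' de' mu' ph' ps' ->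
    dual_obj al' ga' mu' ph' ps' <= dual_obj al ga mu ph ps.

(* ---------------- minima with the +infinity convention ----------------
   fmin s = None encodes +infinity (minimum over an empty set). *)
Definition fmin (s : seq R) : option R :=
  foldr (fun v o => Some (if o is Some w then Num.min v w else v)) None s.
Definition negpartE (o : option R) : R :=
  if o is Some v then Num.max (- v) 0 else 0.
(* (t)^+ ; only applied to minima over nonempty index sets *)
Definition pospartE (o : option R) : R :=
  if o is Some v then Num.max v 0 else 0.

Section Lifting.
Variables (al : B -> R) (be : B -> Lt -> R) (ga : R) (de : Lt -> R)
          (mu ph ps : R).

Definition betabar b l : R := if l \in Lb D b then be b l else 0.
Definition deltabar l : R := if l \in Lp D then de l else 0.
Definition cbar b l m : R :=
  cost D b l m - al b + betabar b l - deltabar l - coef l m * (ph - ps).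
Definition checkbeta b l : R :=
  if l \in Lb D b then be b l
  else negpartE (fmin [seq cbar b l m | m <- index_enum Mt]).
Definition checkdelta l : R :=
  if l \in Lp D then de l
  else pospartE (fmin [seq cbar b l m | b <- index_enum B, m <- index_enum Mt]).
Definition cstar b : R :=
  - negpartE (fmin [seq cbar b l m | l <- enum (Lb D b), m <- index_enum Mt]).
Definition dval l : R :=
  - \sum_(b : B) checkbeta b l + checkdelta l + ga - chi l * mu.
Definition dstar : R :=
  - negpartE (fmin [seq dval l | l <- enum (~: \bigcap_(b : B) Lb D b)]).
Definition alpha_t b : R := al b + cstar b.
Definition gamma_t : R := ga - dstar.
End Lifting.

End Defs.

From HB Require Import structures.
From mathcomp Require Import all_boot all_order all_algebra.
From mathcomp Require Import ring lra.
Set Implicit Arguments. Unset Strict Implicit. Unset Printing Implicit Defensive.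
Import Order.TTheory GRing.Theory Num.Theory.
Local Open Scope ring_scope.

(* The DRMP optimum has value z^RMP by strong LP duality, which follows from Farkas'
   lemma; Fourier-Motzkin elimination proves it over any ordered field.
   In the characteristic lifting, an x-row of the DMP is violated by at most
   -c*_b (for l in L(b) by definition of c*_b, otherwise by the choice of the
   lifted beta and delta), and a y-row is violated only for l outside the
   intersection of the L(b), by at most -d*.  Lowering alpha_b by -c*_b and
   raising gamma by -d* therefore gives a DMP-feasible point whose objective is
   z^RMP + sum_b c*_b + k d*, and weak duality for the MP yields the bound. *)

Section IndicatorSums.
Variable R : realFieldType.

Lemma sum_unit (F : unit -> R) : \sum_(u : unit) F u = F tt.
Proof. by rewrite (big_pred1 tt) // => -[]. Qed.

Lemma mulr_if0l (P : bool) (a y : R) : (if P then a else 0) * y = if P then a * y else 0.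
Proof. by case: P; rewrite ?mul0r. Qed.

Lemma mulr_if0r (P : bool) (a y : R) : y * (if P then a else 0) = if P then y * a else 0.
Proof. by case: P; rewrite ?mulr0. Qed.

Lemma sum_if0 (T : finType) (P : bool) (F : T -> R) :
  \sum_t (if P then F t else 0) = if P then \sum_t F t else 0.
Proof. by case: P => //; rewrite big1. Qed.

Lemma sum_if_eq (T : finType) (t0 : T) (F : T -> R) :
  \sum_t (if t == t0 then F t else 0) = F t0.
Proof. by rewrite -big_mkcond big_pred1_eq. Qed.

Lemma sum_mulr_if_eq (T : finType) (t0 : T) (F : T -> R) (k : R) :
  \sum_t F t * (if t0 == t then k else 0) = F t0 * k.
Proof.
under eq_bigr do rewrite mulr_if0r eq_sym.
by rewrite sum_if_eq.
Qed.

Lemma sum_mulr0 (T : finType) (F : T -> R) : \sum_t F t * 0 = 0.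
Proof. by rewrite big1 // => t _; rewrite mulr0. Qed.

Lemma sum_mul0r (T : finType) (F : T -> R) : \sum_t 0 * F t = 0.
Proof. by rewrite big1 // => t _; rewrite mul0r. Qed.

Lemma sum3_mul0r (T U W : finType) (F : T -> U -> W -> R) :
  \sum_t \sum_u \sum_w 0 * F t u w = 0.
Proof. by do 2 (rewrite big1 // => ? _); rewrite sum_mul0r. Qed.

Lemma sum2_mulr0 (T U : finType) (F : T -> U -> R) : \sum_t \sum_u F t u * 0 = 0.
Proof. by rewrite big1 // => t _; rewrite sum_mulr0. Qed.

Lemma sum3_mulr0 (T U W : finType) (F : T -> U -> W -> R) :
  \sum_t \sum_u \sum_w F t u w * 0 = 0.
Proof. by rewrite big1 // => t _; rewrite sum2_mulr0. Qed.

Lemma sum2_mulr_if_eql (T U : finType) (t0 : T) (F : T -> U -> R) (G : U -> R) :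
  \sum_t \sum_u F t u * (if t0 == t then G u else 0) = \sum_u F t0 u * G u.
Proof.
rewrite -[RHS](sum_if_eq t0 (fun t => \sum_u F t u * G u)).
by apply: eq_bigr => t _; rewrite eq_sym; case: eqP => _; rewrite ?sum_mulr0.
Qed.

Lemma sum2_mulr_if_eqr (T U : finType) (u0 : U) (F : T -> U -> R) (G : T -> R) :
  \sum_t \sum_u F t u * (if u0 == u then G t else 0) = \sum_t F t u0 * G t.
Proof. by apply: eq_bigr => t _; rewrite sum_mulr_if_eq. Qed.

Lemma sum_pair (T U : finType) (F : T * U -> R) : \sum_q F q = \sum_t \sum_u F (t, u).
Proof. by rewrite pair_bigA; apply: eq_bigr => -[]. Qed.

Lemma sum_triple (T U W : finType) (F : T * U * W -> R) :
  \sum_q F q = \sum_t \sum_u \sum_w F (t, u, w).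
Proof. by rewrite sum_pair (sum_pair (fun tu => \sum_w F (tu, w))). Qed.

Lemma sum3_mulr_if_eq (T U W : finType) (t0 : T) (u0 : U) (w0 : W)
    (F : T -> U -> W -> R) (k : R) :
  \sum_t \sum_u \sum_w F t u w * (if (t0, u0, w0) == (t, u, w) then k else 0) =
  F t0 u0 w0 * k.
Proof.
rewrite -[RHS](sum_mulr_if_eq (t0, u0, w0) (fun q => F q.1.1 q.1.2 q.2)).
by rewrite sum_triple.
Qed.

End IndicatorSums.

Section LinearInequalities.
Variables (R : realFieldType) (V : finType).

Definition lp_feasible (C : finType) (A : C -> V -> R) (b : C -> R) (v : V -> R) :=
  forall c, b c <= \sum_i A c i * v i.

Definition row_cone (C : finType) (A : C -> V -> R) (b : C -> R)
    (a : V -> R) (beta : R) :=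
  exists lam : C -> R, (forall c, 0 <= lam c) /\
    (forall i, a i = \sum_c lam c * A c i) /\ beta = \sum_c lam c * b c.

Section RowCone.
Variables (C : finType) (A : C -> V -> R) (b : C -> R).

Lemma row_cone_row c : row_cone A b (A c) (b c).
Proof.
have delta (F : C -> R) : F c = \sum_c' (if c' == c then 1 else 0) * F c'.
  by rewrite (bigD1 c) //= eqxx mul1r big1 ?addr0 // => c' /negbTE ->; rewrite mul0r.
exists (fun c' => if c' == c then 1 else 0); split; last by split => [i|]; apply: delta.
by move=> c'; case: ifP.
Qed.

Lemma row_cone0 : row_cone A b (fun _ => 0) 0.
Proof.
exists (fun _ => 0); split => //.
by split => [i|]; rewrite big1 // => c _; rewrite mul0r.
Qed.

Lemma row_cone_eq a a' beta beta' : (forall i, a i = a' i) -> beta = beta' ->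
  row_cone A b a beta -> row_cone A b a' beta'.
Proof.
move=> eq_a <- [lam [lam_ge0 [a_lam beta_lam]]].
by exists lam; split => //; split => // i; rewrite -eq_a.
Qed.

Lemma row_coneD a1 beta1 a2 beta2 :
  row_cone A b a1 beta1 -> row_cone A b a2 beta2 ->
  row_cone A b (fun i => a1 i + a2 i) (beta1 + beta2).
Proof.
move=> [l1 [l1_ge0 [a1E beta1E]]] [l2 [l2_ge0 [a2E beta2E]]].
exists (fun c => l1 c + l2 c); split; first by move=> c; rewrite addr_ge0.
split => [i|]; rewrite ?a1E ?a2E ?beta1E ?beta2E -big_split;
  by apply: eq_bigr => c _; rewrite mulrDl.
Qed.

Lemma row_coneZ k a beta : 0 <= k -> row_cone A b a beta ->
  row_cone A b (fun i => k * a i) (k * beta).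
Proof.
move=> k_ge0 [lam [lam_ge0 [aE betaE]]].
exists (fun c => k * lam c); split; first by move=> c; rewrite mulr_ge0.
split => [i|]; rewrite ?aE ?betaE mulr_sumr; by apply: eq_bigr => c _; rewrite mulrA.
Qed.

Lemma row_cone_sum (I : finType) (k : I -> R) (a : I -> V -> R) (beta : I -> R) :
  (forall i, 0 <= k i) -> (forall i, row_cone A b (a i) (beta i)) ->
  row_cone A b (fun v => \sum_i k i * a i v) (\sum_i k i * beta i).
Proof.
move=> k_ge0 cone_a; elim: (index_enum I) => [|i s IH].
  by apply: row_cone_eq row_cone0 => [v|]; rewrite big_nil.
apply: row_cone_eq (row_coneD (row_coneZ (k_ge0 i) (cone_a i)) IH) => [v|];
  by rewrite big_cons.
Qed.

End RowCone.

Lemma exists_separator (T : eqType) (s1 s2 : seq T) (L U : T -> R) :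
  (forall p n, p \in s1 -> n \in s2 -> L p <= U n) ->
  exists t, (forall p, p \in s1 -> L p <= t) /\ (forall n, n \in s2 -> t <= U n).
Proof.
elim: s1 => [|p s1 IH] LU.
  elim: s2 {LU} => [|n s2 [t [_ t_le]]]; first by exists 0.
  case: (lerP t (U n)) => [tn|nt].
    by exists t; split => // n'; rewrite in_cons => /predU1P [->|/t_le].
  exists (U n); split => // n'; rewrite in_cons => /predU1P [->//|/t_le].
  exact/le_trans/ltW.
have [t [le_t t_le]] : exists t, (forall p, p \in s1 -> L p <= t) /\
    (forall n, n \in s2 -> t <= U n).
  by apply: IH => p' n hp hn; apply: LU; rewrite ?in_cons ?hp ?orbT.
case: (lerP (L p) t) => [pt|tp].
  by exists t; split => // p'; rewrite in_cons => /predU1P [->|/le_t].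
exists (L p); split => [p'|n hn]; last by apply: LU; rewrite ?in_cons ?eqxx.
by rewrite in_cons => /predU1P [->//|/le_t h]; apply: le_trans h (ltW tp).
Qed.

Section FourierMotzkin.
Variables (C : finType) (A : C -> V -> R) (b : C -> R) (j : V).

Definition fm_A (c : C + C * C) : V -> R :=
  match c with
  | inl c => if A c j == 0 then A c else fun _ => 0
  | inr (p, q) => if (0 < A p j) && (A q j < 0)
                  then fun i => - A q j * A p i + A p j * A q i else fun _ => 0
  end.

Definition fm_b (c : C + C * C) : R :=
  match c with
  | inl c => if A c j == 0 then b c else 0
  | inr (p, q) => if (0 < A p j) && (A q j < 0) then - A q j * b p + A p j * b q else 0
  end.

Lemma fm_A_eliminated c : fm_A c j = 0.
Proof. by case: c => [c|[p q]] /=; case: ifP => // h; [apply/eqP | ring]. Qed.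

Lemma fm_A_zero c i : (forall c, A c i = 0) -> fm_A c i = 0.
Proof. by move=> A0; case: c => [c|[p q]] /=; case: ifP; rewrite ?A0 ?mulr0 ?addr0. Qed.

Lemma fm_row_cone c : row_cone A b (fm_A c) (fm_b c).
Proof.
case: c => [c|[p q]] /=; first by case: ifP => _; [apply: row_cone_row | apply: row_cone0].
case: ifP => [/andP [p_gt0 q_lt0]|_]; last exact: row_cone0.
by apply: row_coneD; apply: row_coneZ; rewrite ?oppr_ge0 ?ltW //; apply: row_cone_row.
Qed.

Lemma sum_split_at (c : C) (u : V -> R) t :
  \sum_i A c i * (if i == j then t else u i) =
  \sum_i A c i * (if i == j then 0 else u i) + A c j * t.
Proof.
rewrite (bigD1 j) //= [in RHS](bigD1 j) //= !eqxx mulr0 add0r addrC; congr (_ + _).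
by apply: eq_bigr => i /negbTE ->.
Qed.

(* Any solution of the eliminated system extends to the original one: the value
   of the variable [j] only has to separate the lower bounds [L] from the upper ones. *)
Lemma fm_feasible : (exists v, lp_feasible fm_A fm_b v) -> exists v, lp_feasible A b v.
Proof.
move=> [v v_feas].
pose r c := \sum_i A c i * (if i == j then 0 else v i).
have vE c : \sum_i A c i * v i = r c + A c j * v j.
  rewrite -sum_split_at; apply: eq_bigr => i _; by case: eqP => // ->.
pose L c := (b c - r c) / A c j.
have LU p q : p \in [seq p <- index_enum C | 0 < A p j] ->
    q \in [seq q <- index_enum C | A q j < 0] -> L p <= L q.
  rewrite !mem_filter !mem_index_enum !andbT => p_gt0 q_lt0.
  have := v_feas (inr (p, q)); rewrite /= p_gt0 q_lt0 /=.
  under eq_bigr do rewrite mulrDl -!mulrA.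
  rewrite big_split /= -!mulr_sumr !vE /L ler_pdivrMr //.
  set u := (b q - r q) / A q j.
  have uE : u * A q j = b q - r q by rewrite /u divfK // ltr0_neq0.
  by nra.
have [t [le_t t_le]] := exists_separator LU.
exists (fun i => if i == j then t else v i) => c; rewrite sum_split_at -/(r c).
case: (ltrgtP (A c j) 0) => Acj.
- have := t_le c; rewrite mem_filter mem_index_enum Acj => /(_ isT).
  by rewrite /L ler_ndivlMr // => h; lra.
- have := le_t c; rewrite mem_filter mem_index_enum Acj => /(_ isT).
  by rewrite /L ler_pdivrMr // => h; lra.
- by have := v_feas (inl c); rewrite /= Acj eqxx vE Acj !mul0r addr0.
Qed.

End FourierMotzkin.

Lemma farkas_support n (X : {set V}) (C : finType) (A : C -> V -> R) (b : C -> R) :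
  #|X| = n -> (forall c i, i \notin X -> A c i = 0) ->
  ~ (exists v, lp_feasible A b v) ->
  exists beta, 0 < beta /\ row_cone A b (fun _ => 0) beta.
Proof.
elim: n X C A b => [|n IH] X C A b cardX A_supp infeas.
  have A0 c i : A c i = 0 by apply: A_supp; rewrite (cards0_eq cardX) inE.
  have [/existsP [c b_gt0]|] := boolP [exists c, 0 < b c].
    by exists (b c); split => //; apply: row_cone_eq (row_cone_row A b c).
  rewrite negb_exists => /forallP b_le0; case: infeas; exists (fun _ => 0) => c.
  by rewrite big1 => [|i _]; [rewrite leNgt b_le0 | rewrite mulr0].
have [j jX] : exists j, j \in X by apply/card_gt0P; rewrite cardX.
have cardXj : #|X :\ j| = n by move: cardX; rewrite (cardsD1 j) jX add1n => -[].
have fm_supp c i : i \notin X :\ j -> fm_A A j c i = 0.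
  rewrite in_setD1 negb_and negbK => /predU1P [->|iX]; first exact: fm_A_eliminated.
  by apply: fm_A_zero => c'; apply: A_supp.
have fm_infeas : ~ (exists v, lp_feasible (fm_A A j) (fm_b A b j) v).
  by move/fm_feasible.
have [beta [beta_gt0 [lam [lam_ge0 [lam0 betaE]]]]] := IH _ _ _ _ cardXj fm_supp fm_infeas.
exists beta; split => //.
apply: row_cone_eq (row_cone_sum lam_ge0 (fm_row_cone A b j)) => [i|]; by rewrite ?lam0.
Qed.

Lemma farkas (C : finType) (A : C -> V -> R) (b : C -> R) :
  ~ (exists v, lp_feasible A b v) ->
  exists beta, 0 < beta /\ row_cone A b (fun _ => 0) beta.
Proof. by apply: (@farkas_support _ setT) => // c i; rewrite inE. Qed.

Lemma lp_weak_duality (C : finType) (A : C -> V -> R) (b : C -> R) (cst : V -> R) lam v :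
  (forall c, 0 <= lam c) -> (forall i, \sum_c lam c * A c i = cst i) ->
  lp_feasible A b v -> \sum_c lam c * b c <= \sum_i cst i * v i.
Proof.
move=> lam_ge0 lamA v_feas.
apply: (@le_trans _ _ (\sum_c lam c * \sum_i A c i * v i)).
  by apply: ler_sum => c _; apply: ler_wpM2l.
under eq_bigr do rewrite mulr_sumr.
rewrite exchange_big /=; apply: ler_sum => i _; rewrite -lamA mulr_suml.
by apply: ler_sum => c _; rewrite mulrA.
Qed.

(* Adjoining the objective cut [cst . v <= z - eps] makes the system infeasible;
   Farkas' multiplier of that cut is nonzero because the original system is feasible. *)
Lemma lp_dual_approx (C : finType) (A : C -> V -> R) (b : C -> R) (cst : V -> R) z :
  (exists v, lp_feasible A b v) ->
  (forall v, lp_feasible A b v -> z <= \sum_i cst i * v i) ->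
  forall eps, 0 < eps -> exists lam : C -> R, (forall c, 0 <= lam c) /\
    (forall i, \sum_c lam c * A c i = cst i) /\ z - eps < \sum_c lam c * b c.
Proof.
move=> [v0 v0_feas] z_le eps eps_gt0.
pose A' (c : C + unit) : V -> R := if c is inl c then A c else fun i => - cst i.
pose b' (c : C + unit) : R := if c is inl c then b c else eps - z.
have infeas : ~ (exists v, lp_feasible A' b' v).
  move=> [v v_feas]; have := v_feas (inr tt); rewrite /=.
  under eq_bigr do rewrite mulNr; rewrite sumrN.
  by have := z_le v (fun c => v_feas (inl c)); lra.
have [beta [beta_gt0 [lam [lam_ge0 [lam0 betaE]]]]] := farkas infeas.
pose l0 := lam (inr tt); pose mu c := lam (inl c).
have mu_ge0 c : 0 <= mu c by apply: lam_ge0.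
have muA i : \sum_c mu c * A c i = l0 * cst i.
  by have := lam0 i; rewrite big_sumType /= sum_unit /mu /l0 mulrN; lra.
have {}betaE : beta = \sum_c mu c * b c + l0 * (eps - z).
  by rewrite betaE big_sumType /= sum_unit.
have [l0_lt0|l0_gt0|l0_eq0] := ltrgtP l0 0.
- by rewrite ltNge lam_ge0 in l0_lt0.
- exists (fun c => mu c / l0); split; first by move=> c; rewrite divr_ge0 // ltW.
  split => [i|]; under eq_bigr do rewrite mulrAC; rewrite -mulr_suml.
    by rewrite muA mulrAC divff ?mul1r ?gt_eqF.
  by rewrite ltr_pdivlMr //; nra.
- have muA0 i : \sum_c mu c * A c i = 0 by rewrite muA l0_eq0 mul0r.
  have := lp_weak_duality (cst := fun _ => 0) mu_ge0 muA0 v0_feas.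
  rewrite [X in _ <= X]big1 => [|i _]; last by rewrite mul0r.
  by rewrite l0_eq0 mul0r addr0 in betaE; lra.
Qed.

End LinearInequalities.

Section RMPSystem.
Variables (R : realFieldType) (B S Mt Lt : finType) (D : data R B S Mt Lt).

Record lin_row := LinRow {
  row_x : B -> Lt -> Mt -> R; row_y : Lt -> R; row_p : R; row_rhs : R }.

Local Notation var := (B * Lt * Mt + Lt + unit)%type.
Local Notation var_x b l m := (inl (inl (b, l, m))).
Local Notation var_y l := (inl (inr l)).
Local Notation var_p := (inr tt).

Definition row_vec (r : lin_row) (i : var) : R :=
  match i with var_x b l m => row_x r b l m | var_y l => row_y r l | var_p => row_p r end.

Definition pt_x (v : var -> R) b l m := v (var_x b l m).
Definition pt_y (v : var -> R) l := v (var_y l).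
Definition pt_p (v : var -> R) := v var_p.

Definition point (x : B -> Lt -> Mt -> R) (y : Lt -> R) (p : R) (i : var) : R :=
  match i with var_x b l m => x b l m | var_y l => y l | var_p => p end.

Lemma dot_row_vec r v : \sum_i row_vec r i * v i =
  \sum_b \sum_l \sum_m row_x r b l m * pt_x v b l m + \sum_l row_y r l * pt_y v l
  + row_p r * pt_p v.
Proof. by rewrite !big_sumType /= sum_unit sum_triple. Qed.

(* One constraint per RMP constraint (equalities as two opposite rows, [phi true]
   and [phi false] for the [phi]- and [psi]-rows), plus sign constraints; every
   coefficient of a variable absent from the RMP is zero. *)
Local Notation con :=
  (B * Lt * Mt + Lt + unit + B * bool + B * Lt + unit + Lt + unit + bool)%type.
Local Notation con_x b l m := (inl (inl (inl (inl (inl (inl (inl (inl (b, l, m))))))))).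
Local Notation con_y l := (inl (inl (inl (inl (inl (inl (inl (inr l)))))))).
Local Notation con_p := (inl (inl (inl (inl (inl (inl (inr tt))))))).
Local Notation con_alpha b s := (inl (inl (inl (inl (inl (inr (b, s))))))).
Local Notation con_beta b l := (inl (inl (inl (inl (inr (b, l)))))).
Local Notation con_gamma := (inl (inl (inl (inr tt)))).
Local Notation con_delta l := (inl (inl (inr l))).
Local Notation con_mu := (inl (inr tt)).
Local Notation con_phi s := (inr s).

Definition rmp_dom b l m := (l \in Lb D b) && (m \in Mb D b l).
Definition sgn (s : bool) : R := if s then 1 else -1.

Definition rmp_row (c : con) : lin_row :=
  match c with
  | con_x b0 l0 m0 => LinRow (fun b l m =>
      if (b, l, m) == (b0, l0, m0) then (if rmp_dom b l m then 1 else 0) else 0)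
      (fun _ => 0) 0 0
  | con_y l0 => LinRow (fun _ _ _ => 0)
      (fun l => if l == l0 then (if l \in Lp D then 1 else 0) else 0) 0 0
  | con_p => LinRow (fun _ _ _ => 0) (fun _ => 0) 1 0
  | con_alpha b0 s => LinRow (fun b l m =>
      if b == b0 then (if rmp_dom b l m then sgn s else 0) else 0) (fun _ => 0) 0 (sgn s)
  | con_beta b0 l0 => LinRow (fun b l m =>
      if b == b0 then (if l == l0 then (if rmp_dom b l m then -1 else 0) else 0) else 0)
      (fun l => if l == l0 then (if l \in Lb D b0 then 1 else 0) else 0) 0 0
  | con_gamma => LinRow (fun _ _ _ => 0) (fun l => if l \in Lp D then -1 else 0) 0
      (- (kk D)%:R)
  | con_delta l0 => LinRow (fun b l m =>
      if l == l0 then (if (l \in Lp D) && rmp_dom b l m then 1 else 0) else 0)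
      (fun l => if l == l0 then (if l \in Lp D then -1 else 0) else 0) 0 0
  | con_mu => LinRow (fun _ _ _ => 0) (fun l => if l \in Lp D :\: Lpp D then 1 else 0) 1 1
  | con_phi s => LinRow (fun b l m => if rmp_dom b l m then sgn s * coef D l m else 0)
      (fun _ => 0) 0 (if s then Ilo D else - Ihi D)
  end.

Definition rmp_A (c : con) : var -> R := row_vec (rmp_row c).
Definition rmp_b (c : con) : R := row_rhs (rmp_row c).
Definition rmp_cost : var -> R :=
  row_vec (LinRow (fun b l m => if rmp_dom b l m then cost D b l m else 0) (fun _ => 0)
    (Pen D) 0).

Lemma con_ind (P : con -> Prop) :
  (forall b l m, P (con_x b l m)) -> (forall l, P (con_y l)) -> P con_p ->
  (forall b s, P (con_alpha b s)) -> (forall b l, P (con_beta b l)) -> P con_gamma ->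
  (forall l, P (con_delta l)) -> P con_mu -> (forall s, P (con_phi s)) -> forall c, P c.
Proof.
move=> Px Py Pp Palpha Pbeta Pgamma Pdelta Pmu Pphi.
by case=> [[[[[[[[[[b l] m]|l]|[]]|[b s]]|[b l]]|[]]|l]|[]]|s].
Qed.

Lemma sum_rmp_dom b (G : Lt -> Mt -> R) :
  \sum_l \sum_m (if rmp_dom b l m then G l m else 0) =
  \sum_(l in Lb D b) \sum_(m in Mb D b l) G l m.
Proof.
rewrite [RHS]big_mkcond; apply: eq_bigr => l _; rewrite /rmp_dom.
by case: (l \in Lb D b) => /=; [rewrite [RHS]big_mkcond | rewrite big1].
Qed.

Section Rows.
Variable v : var -> R.
Local Notation x := (pt_x v).
Local Notation y := (pt_y v).
Local Notation p := (pt_p v).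
Local Notation dot c := (\sum_i rmp_A c i * v i).

Lemma dot_con_x b0 l0 m0 :
  dot (con_x b0 l0 m0) = if rmp_dom b0 l0 m0 then x b0 l0 m0 else 0.
Proof.
rewrite /rmp_A dot_row_vec /= sum_mul0r mul0r !addr0.
under eq_bigr do under eq_bigr do under eq_bigr do rewrite mulr_if0l.
have := sum_triple (fun t => if t == (b0, l0, m0) then
  (if rmp_dom t.1.1 t.1.2 t.2 then 1 else 0) * x t.1.1 t.1.2 t.2 else 0).
by rewrite /= => <-; rewrite sum_if_eq /=; case: ifP; rewrite ?mul1r ?mul0r.
Qed.

Lemma dot_con_y l0 : dot (con_y l0) = if l0 \in Lp D then y l0 else 0.
Proof.
rewrite /rmp_A dot_row_vec /= sum3_mul0r mul0r add0r addr0.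
under eq_bigr do rewrite mulr_if0l.
by rewrite sum_if_eq; case: ifP; rewrite ?mul1r ?mul0r.
Qed.

Lemma dot_con_p : dot con_p = p.
Proof. by rewrite /rmp_A dot_row_vec /= sum3_mul0r sum_mul0r mul1r !add0r. Qed.

Lemma dot_con_alpha b0 s :
  dot (con_alpha b0 s) = sgn s * \sum_(l in Lb D b0) \sum_(m in Mb D b0 l) x b0 l m.
Proof.
rewrite /rmp_A dot_row_vec /= sum_mul0r mul0r !addr0.
under eq_bigr do under eq_bigr do under eq_bigr do rewrite mulr_if0l.
under eq_bigr do under eq_bigr do rewrite sum_if0.
under eq_bigr do rewrite sum_if0.
rewrite sum_if_eq -sum_rmp_dom mulr_sumr; apply: eq_bigr => l _; rewrite mulr_sumr.
by apply: eq_bigr => m _; rewrite mulr_if0l mulr_if0r.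
Qed.

Lemma dot_con_beta b0 l0 : dot (con_beta b0 l0) =
  if l0 \in Lb D b0 then y l0 - \sum_(m in Mb D b0 l0) x b0 l0 m else 0.
Proof.
rewrite /rmp_A dot_row_vec /= mul0r addr0.
under eq_bigr do under eq_bigr do under eq_bigr do rewrite mulr_if0l.
under eq_bigr do under eq_bigr do rewrite sum_if0.
under eq_bigr do rewrite sum_if0.
rewrite sum_if_eq.
under [X in X + _ = _]eq_bigr do under eq_bigr do rewrite mulr_if0l.
under [X in X + _ = _]eq_bigr do rewrite sum_if0.
rewrite sum_if_eq.
under [X in _ + X = _]eq_bigr do rewrite mulr_if0l.
rewrite sum_if_eq /rmp_dom.
case: (l0 \in Lb D b0) => /=; last by rewrite sum_mul0r mul0r addr0.
rewrite mul1r addrC [in RHS]big_mkcond -sumrN; congr (_ + _).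
by apply: eq_bigr => m _; case: ifP; rewrite ?mulN1r ?oppr0 ?mul0r.
Qed.

Lemma dot_con_gamma : dot con_gamma = - \sum_(l in Lp D) y l.
Proof.
rewrite /rmp_A dot_row_vec /= sum3_mul0r mul0r add0r addr0 [in RHS]big_mkcond -sumrN.
by apply: eq_bigr => l _; case: ifP; rewrite ?mulN1r ?oppr0 ?mul0r.
Qed.

Lemma dot_con_delta l0 : dot (con_delta l0) = if l0 \in Lp D then
  \sum_(b : B | l0 \in Lb D b) \sum_(m in Mb D b l0) x b l0 m - y l0 else 0.
Proof.
rewrite /rmp_A dot_row_vec /= mul0r addr0.
under eq_bigr do under eq_bigr do under eq_bigr do rewrite mulr_if0l.
under eq_bigr do under eq_bigr do rewrite sum_if0.
under eq_bigr do rewrite sum_if_eq.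
under [X in _ + X = _]eq_bigr do rewrite mulr_if0l.
rewrite sum_if_eq.
case: (l0 \in Lp D) => /=; last first.
  by rewrite mul0r addr0 big1 // => b _; rewrite sum_mul0r.
rewrite mulN1r [in RHS]big_mkcond; congr (_ - _); apply: eq_bigr => b _.
rewrite /rmp_dom; case: (l0 \in Lb D b) => /=; first rewrite [in RHS]big_mkcond.
  by apply: eq_bigr => m _; case: ifP; rewrite ?mul1r ?mul0r.
by rewrite sum_mul0r.
Qed.

Lemma dot_con_mu : dot con_mu = \sum_(l in Lp D :\: Lpp D) y l + p.
Proof.
rewrite /rmp_A dot_row_vec /= sum3_mul0r add0r mul1r [in RHS]big_mkcond.
by congr (_ + _); apply: eq_bigr => l _; case: ifP; rewrite ?mul1r ?mul0r.
Qed.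

Lemma dot_con_phi s : dot (con_phi s) = sgn s * RMP_I D x.
Proof.
rewrite /rmp_A dot_row_vec /= sum_mul0r mul0r !addr0 /RMP_I mulr_sumr.
apply: eq_bigr => b _; under eq_bigr do under eq_bigr do rewrite mulr_if0l.
rewrite sum_rmp_dom mulr_sumr; apply: eq_bigr => l _; rewrite mulr_sumr.
by apply: eq_bigr => m _; rewrite mulrA.
Qed.

Lemma dot_rmp_cost : \sum_i rmp_cost i * v i = RMP_obj D x p.
Proof.
rewrite /rmp_cost dot_row_vec sum_mul0r addr0 /RMP_obj; congr (_ + _).
apply: eq_bigr => b _; under eq_bigr do under eq_bigr do rewrite mulr_if0l.
by rewrite sum_rmp_dom.
Qed.

End Rows.

Lemma rmp_feasibleE v : lp_feasible rmp_A rmp_b v <-> RMP_feasible D (pt_x v) (pt_y v) (pt_p v).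
Proof.
split=> [feas|].
  have alphaE b : \sum_(l in Lb D b) \sum_(m in Mb D b l) pt_x v b l m = 1.
    have := feas (con_alpha b true); have := feas (con_alpha b false).
    rewrite !dot_con_alpha /rmp_b /= /sgn mulN1r mul1r lerN2 => le1 ge1.
    by apply/eqP; rewrite eq_le le1 ge1.
  have := feas (con_phi true); have := feas (con_phi false).
  rewrite !dot_con_phi /rmp_b /= /sgn mul1r mulN1r => phi_lo phi_hi.
  have := feas con_gamma; rewrite dot_con_gamma => gamma_ok.
  have := feas con_mu; rewrite dot_con_mu => mu_ok.
  have := feas con_p; rewrite dot_con_p => p_ge0.
  do ![split=> //].
  - move=> b l m lLb mMb; have := feas (con_x b l m).
    by rewrite dot_con_x /rmp_dom lLb mMb.
  - by move=> l lLp; have := feas (con_y l); rewrite dot_con_y lLp.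
  - by move=> b l lLb; have := feas (con_beta b l); rewrite dot_con_beta lLb.
  - by move=> l lLp; have := feas (con_delta l); rewrite dot_con_delta lLp.
move=> [x_ge0 [y_ge0 [p_ge0 [alphaE [beta_ok [gamma_ok [delta_ok [mu_ok [phi_lo phi_hi]]]]]]]]].
apply: con_ind.
- move=> b l m; rewrite dot_con_x /rmp_b /=.
  by case: ifP => //= /andP [lLb mMb]; apply: x_ge0.
- by move=> l; rewrite dot_con_y /rmp_b /=; case: ifP => // lLp; apply: y_ge0.
- by rewrite dot_con_p.
- by move=> b s; rewrite dot_con_alpha alphaE mulr1.
- by move=> b l; rewrite dot_con_beta /rmp_b /=; case: ifP => // lLb; apply: beta_ok.
- by rewrite dot_con_gamma.
- by move=> l; rewrite dot_con_delta /rmp_b /=; case: ifP => // lLp; apply: delta_ok.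
- by rewrite dot_con_mu.
- by case; rewrite dot_con_phi /rmp_b /= /sgn ?mul1r ?mulN1r.
Qed.

Hypothesis LbLp : forall b, Lb D b \subset Lp D.

Section Columns.
Variable lam : con -> R.

Lemma col_x b l m : \sum_c lam c * rmp_A c (var_x b l m) =
  if rmp_dom b l m then
    lam (con_x b l m) + (lam (con_alpha b true) - lam (con_alpha b false))
    - lam (con_beta b l) + lam (con_delta l)
    + coef D l m * (lam (con_phi true) - lam (con_phi false))
  else 0.
Proof.
rewrite !big_sumType /= !sum_unit sum_triple !sum_pair /= !sum_mulr0 !mulr0.
rewrite sum3_mulr_if_eq !sum2_mulr_if_eql !sum_mulr_if_eq !big_bool /=.
case dom_blm: (rmp_dom b l m); rewrite /= ?andbF; last by rewrite !mulr0 !addr0.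
have -> : l \in Lp D by case/andP: dom_blm => lLb _; apply: (subsetP (LbLp b)).
by rewrite /sgn /=; ring.
Qed.

Lemma col_y l : \sum_c lam c * rmp_A c (var_y l) =
  if l \in Lp D then
    lam (con_y l) + \sum_(b : B | l \in Lb D b) lam (con_beta b l)
    - lam con_gamma - lam (con_delta l) + chi D l * lam con_mu
  else 0.
Proof.
rewrite !big_sumType /= !sum_unit sum_triple !sum_pair /= !sum3_mulr0 !sum2_mulr0.
rewrite !sum_mulr0 !mulr0 sum2_mulr_if_eqr !sum_mulr_if_eq.
case lLp: (l \in Lp D) => /=; last first.
  rewrite in_setD lLp andbF big1 ?mulr0 ?addr0 // => b _.
  have lNLb : l \notin Lb D b by apply: contraFN lLp; apply: (subsetP (LbLp b)).
  by rewrite (negbTE lNLb) mulr0.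
rewrite [in RHS]big_mkcond in_setD lLp andbT /chi.
under eq_bigr do rewrite mulr_if0r mulr1.
by case: (l \in Lpp D) => /=; ring.
Qed.

Lemma col_p : \sum_c lam c * rmp_A c var_p = lam con_p + lam con_mu.
Proof.
rewrite !big_sumType /= !sum_unit sum_triple !sum_pair /= !sum3_mulr0 !sum2_mulr0.
by rewrite !sum_mulr0 !mulr0 !mulr1; ring.
Qed.

Lemma col_rhs : \sum_c lam c * rmp_b c =
  \sum_b (lam (con_alpha b true) - lam (con_alpha b false)) - (kk D)%:R * lam con_gamma
  + Ilo D * lam (con_phi true) - Ihi D * lam (con_phi false) + lam con_mu.
Proof.
rewrite !big_sumType /= !sum_unit sum_triple !sum_pair /rmp_b /= !sum3_mulr0 !sum2_mulr0.
rewrite !sum_mulr0 !mulr0 big_bool /=.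
under eq_bigr do rewrite big_bool /= /sgn mulr1 mulrN1.
by ring.
Qed.

End Columns.

Lemma pos_sub_neg_part (a : R) : Num.max a 0 - Num.max (- a) 0 = a.
Proof. by rewrite !maxEle; case: (lerP a 0); case: (lerP (- a) 0); lra. Qed.

(* The multipliers of a DRMP-feasible point: the dual variables themselves on the
   RMP constraints (a free [alpha] split into its positive and negative parts) and
   the dual slacks on the sign constraints. *)
Definition drmp_multipliers al be ga de mu ph ps (c : con) : R :=
  match c with
  | con_x b l m => if rmp_dom b l m
      then cost D b l m - (al b - be b l + de l + coef D l m * (ph - ps)) else 0
  | con_y l => if l \in Lp D
      then - (\sum_(b : B | l \in Lb D b) be b l - ga - de l + chi D l * mu) else 0
  | con_p => Pen D - mu
  | con_alpha b s => if s then Num.max (al b) 0 else Num.max (- al b) 0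
  | con_beta b l => if l \in Lb D b then be b l else 0
  | con_gamma => ga
  | con_delta l => if l \in Lp D then de l else 0
  | con_mu => mu
  | con_phi s => if s then ph else ps
  end.

Lemma rmp_weak_duality x y p al be ga de mu ph ps :
  RMP_feasible D x y p -> DRMP_feasible D al be ga de mu ph ps ->
  dual_obj D al ga mu ph ps <= RMP_obj D x p.
Proof.
move=> xyp_feas [be_ge0 [ga_ge0 [de_ge0 [mu_ge0 [ph_ge0 [ps_ge0 [x_cons [y_cons mu_le]]]]]]]].
pose lam := drmp_multipliers al be ga de mu ph ps.
have lam_ge0 c : 0 <= lam c.
  elim/con_ind: c => /=.
  - by move=> b l m; case: ifP => // /andP [lLb mMb]; rewrite subr_ge0 x_cons.
  - by move=> l; case: ifP => // lLp; rewrite oppr_ge0 y_cons.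
  - by rewrite subr_ge0.
  - by move=> b [] /=; rewrite le_max lexx orbT.
  - by move=> b l; case: ifP => // lLb; apply: be_ge0.
  - by [].
  - by move=> l; case: ifP => // lLp; apply: de_ge0.
  - by [].
  - by case.
have lamA i : \sum_c lam c * rmp_A c i = rmp_cost i.
  case: i => [[[[b l] m]|l]|[]].
  - rewrite col_x /rmp_cost /=; case dom_blm: (rmp_dom b l m) => //=.
    have lLb : l \in Lb D b by case/andP: dom_blm.
    rewrite /lam /= lLb (subsetP (LbLp b) _ lLb).
    by have := pos_sub_neg_part (al b); lra.
  - rewrite col_y /rmp_cost /=; case: ifP => // lLp; rewrite /lam /= lLp.
    rewrite [X in - _ + X](eq_bigr (fun b => be b l)) => [|b ->] //.
    by ring.
  - by rewrite col_p /rmp_cost /lam /=; ring.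
have := lp_weak_duality lam_ge0 lamA (proj2 (rmp_feasibleE (point x y p)) xyp_feas).
rewrite col_rhs dot_rmp_cost /dual_obj /=.
by under eq_bigr do rewrite pos_sub_neg_part.
Qed.

Lemma multipliers_drmp_feasible (lam : con -> R) :
  (forall c, 0 <= lam c) -> (forall i, \sum_c lam c * rmp_A c i = rmp_cost i) ->
  DRMP_feasible D (fun b => lam (con_alpha b true) - lam (con_alpha b false))
    (fun b l => lam (con_beta b l)) (lam con_gamma) (fun l => lam (con_delta l))
    (lam con_mu) (lam (con_phi true)) (lam (con_phi false)).
Proof.
move=> lam_ge0 lamA; do 6 (split; first by move=> *; apply: lam_ge0).
split=> [b l m lLb mMb|].
  have := lamA (var_x b l m); rewrite col_x /rmp_cost /= /rmp_dom lLb mMb /=.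
  by have := lam_ge0 (con_x b l m); lra.
split=> [l lLp|].
  have := lamA (var_y l); rewrite col_y /rmp_cost /= lLp.
  by have := lam_ge0 (con_y l); lra.
by have := lamA var_p; rewrite col_p /rmp_cost /=; have := lam_ge0 con_p; lra.
Qed.

Lemma rmp_strong_duality x y p al be ga de mu ph ps :
  RMP_optimal D x y p -> DRMP_optimal D al be ga de mu ph ps ->
  dual_obj D al ga mu ph ps = RMP_obj D x p.
Proof.
move=> [xyp_feas xyp_min] [dual_feas dual_max].
apply/eqP; rewrite eq_le (rmp_weak_duality xyp_feas dual_feas) /= leNgt.
apply/negP; rewrite -subr_gt0 => gap.
have feas0 : exists v, lp_feasible rmp_A rmp_b v.
  by exists (point x y p); apply/rmp_feasibleE.
have opt v : lp_feasible rmp_A rmp_b v -> RMP_obj D x p <= \sum_i rmp_cost i * v i.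
  by move/rmp_feasibleE => v_feas; rewrite dot_rmp_cost; apply: xyp_min v_feas.
have [lam [lam_ge0 [lamA lam_rhs]]] := lp_dual_approx feas0 opt gap.
have := dual_max _ _ _ _ _ _ _ (multipliers_drmp_feasible lam_ge0 lamA).
by rewrite [X in X <= _]/dual_obj -col_rhs; lra.
Qed.

End RMPSystem.

Section MPWeakDuality.
Variables (R : realFieldType) (B S Mt Lt : finType) (D : data R B S Mt Lt).

Lemma mp_x_bound (x : B -> Lt -> Mt -> R) (al : B -> R) (be : B -> Lt -> R)
    (de : Lt -> R) ph ps :
  (forall b l m, 0 <= x b l m) -> (forall b, \sum_l \sum_m x b l m = 1) ->
  (forall b l m, al b - be b l + de l + coef D l m * (ph - ps) <= cost D b l m) ->
  \sum_b al b + \sum_b \sum_l \sum_m (de l - be b l) * x b l m + (ph - ps) * MP_I D x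
  <= \sum_b \sum_l \sum_m cost D b l m * x b l m.
Proof.
move=> x_ge0 x_sum1 x_cons.
have -> : \sum_b al b = \sum_b \sum_l \sum_m al b * x b l m.
  apply: eq_bigr => b _; rewrite -[LHS]mulr1 -(x_sum1 b) mulr_sumr.
  by apply: eq_bigr => l _; rewrite mulr_sumr.
rewrite /MP_I mulr_sumr -!big_split; apply: ler_sum => b _.
rewrite mulr_sumr -!big_split; apply: ler_sum => l _.
rewrite mulr_sumr -!big_split; apply: ler_sum => m _ /=.
by have := ler_wpM2r (x_ge0 b l m) (x_cons b l m); lra.
Qed.

Lemma mp_y_bound (x : B -> Lt -> Mt -> R) (y : Lt -> R) (be : B -> Lt -> R) ga
    (de : Lt -> R) mu :
  (forall b l, 0 <= be b l) -> (forall l, 0 <= de l) -> (forall l, 0 <= y l) ->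
  (forall b l, 0 <= y l - \sum_m x b l m) ->
  (forall l, 0 <= \sum_b \sum_m x b l m - y l) ->
  (forall l, \sum_b be b l - ga - de l + chi D l * mu <= 0) ->
  mu * \sum_(l | l \notin Lpp D) y l - ga * \sum_l y l <=
  \sum_b \sum_l \sum_m (de l - be b l) * x b l m.
Proof.
move=> be_ge0 de_ge0 y_ge0 beta_cons delta_cons y_cons.
have -> : mu * \sum_(l | l \notin Lpp D) y l - ga * \sum_l y l =
          \sum_l (chi D l * mu - ga) * y l.
  rewrite !mulr_sumr [in LHS]big_mkcond -sumrN -big_split /=.
  by apply: eq_bigr => l _; rewrite /chi; case: (l \in Lpp D) => /=; ring.
rewrite exchange_big /=; apply: ler_sum => l _.
have -> : \sum_b \sum_m (de l - be b l) * x b l m =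
          de l * \sum_b \sum_m x b l m - \sum_b be b l * \sum_m x b l m.
  rewrite mulr_sumr -sumrN -big_split /=; apply: eq_bigr => b _.
  by rewrite !mulr_sumr -sumrN -big_split /=; apply: eq_bigr => m _; ring.
have be_x : \sum_b be b l * \sum_m x b l m <= (\sum_b be b l) * y l.
  rewrite mulr_suml; apply: ler_sum => b _; apply: ler_wpM2l => //.
  by rewrite -subr_ge0.
have y_x : y l <= \sum_b \sum_m x b l m by rewrite -subr_ge0.
by have := y_cons l; have := y_ge0 l; have := de_ge0 l; nra.
Qed.

Lemma mp_weak_duality x y p al be ga de mu ph ps :
  MP_feasible D x y p -> DMP_feasible D al be ga de mu ph ps ->
  dual_obj D al ga mu ph ps <= MP_obj D x p.
Proof.
move=> [x_ge0 [y_ge0 [p_ge0 [x_sum1 [beta_cons [gamma_cons [delta_cons [mu_cons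
         [phi_cons psi_cons]]]]]]]]]
       [be_ge0 [ga_ge0 [de_ge0 [mu_ge0 [ph_ge0 [ps_ge0 [x_cons [y_cons mu_le]]]]]]]].
have := mp_x_bound x_ge0 x_sum1 x_cons.
have := mp_y_bound be_ge0 de_ge0 y_ge0 beta_cons delta_cons y_cons.
rewrite /dual_obj /MP_obj; move: mu_cons gamma_cons phi_cons psi_cons.
set Y'' := \sum_(l | l \notin Lpp D) y l; set Y := \sum_l y l; set I := MP_I D x.
move=> mu_cons gamma_cons phi_cons psi_cons y_bound x_bound.
have : 0 <= mu * (Y'' + p - 1) by rewrite mulr_ge0 // subr_ge0.
have : 0 <= ga * ((kk D)%:R - Y) by rewrite mulr_ge0 // subr_ge0 -lerN2.
have : 0 <= ph * (I - Ilo D) by rewrite mulr_ge0 // subr_ge0.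
have : 0 <= ps * (Ihi D - I) by rewrite mulr_ge0 // subr_ge0 -lerN2.
have : 0 <= (Pen D - mu) * p by rewrite mulr_ge0 // subr_ge0.
nra.
Qed.

End MPWeakDuality.

Section ExtendedMin.
Variable R : realFieldType.

Lemma fminP (s : seq R) :
  if fmin s is Some w then w \in s /\ (forall v, v \in s -> w <= v) else s = [::].
Proof.
elim: s => [//|v s]; rewrite /fmin /= -/(fmin s).
case: (fmin s) => [w [ws w_min]|->] /=; last first.
  by split=> [|u]; rewrite ?inE // => /eqP ->.
rewrite minEle; case: lerP => [vw|wv]; split; rewrite ?inE ?eqxx ?ws ?orbT // => u.
  by case/predU1P => [->|/w_min]; [| apply: le_trans].
by case/predU1P => [->|/w_min //]; apply: ltW.
Qed.

Lemma negpartE_ge0 (o : option R) : 0 <= negpartE o.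
Proof. by case: o => [w|] //=; rewrite le_max lexx orbT. Qed.

Lemma pospartE_ge0 (o : option R) : 0 <= pospartE o.
Proof. by case: o => [w|] //=; rewrite le_max lexx orbT. Qed.

Lemma oppr_negpartE_fmin_le (s : seq R) v : v \in s -> - negpartE (fmin s) <= v.
Proof.
move=> vs; have := fminP s; case: (fmin s) => [w [_ w_min]|s0]; last by rewrite s0 in vs.
by have := w_min v vs; rewrite /= maxEle; case: (lerP (- w) 0); lra.
Qed.

Lemma pospartE_sub_negpartE_le (s1 s2 : seq R) t :
  {subset s1 <= s2} -> t \in s1 -> pospartE (fmin s2) - negpartE (fmin s1) <= t.
Proof.
move=> s12 ts1.
have := fminP s1; case: (fmin s1) => [u [us1 u_min]|s0]; last by rewrite s0 in ts1.
have := fminP s2; case: (fmin s2) => [w [_ w_min]|s0]; last by have := s12 _ ts1; rewrite s0.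
have := u_min _ ts1; have := w_min _ (s12 _ us1).
by rewrite /= !maxEle; case: (lerP w 0); case: (lerP (- u) 0); lra.
Qed.

End ExtendedMin.

Section CharacteristicLifting.
Variables (R : realFieldType) (B S Mt Lt : finType) (D : data R B S Mt Lt).
Variables (al : B -> R) (be : B -> Lt -> R) (ga : R) (de : Lt -> R) (mu ph ps : R).

Local Notation cb := (cbar D al be de ph ps).
Local Notation cs := (cstar D al be de ph ps).
Local Notation ds := (dstar D al be ga de mu ph ps).
Local Notation bt := (checkbeta D al be de ph ps).
Local Notation dt := (checkdelta D al be de ph ps).

Lemma lifting_dual_obj :
  dual_obj D (alpha_t D al be de ph ps) (gamma_t D al be ga de mu ph ps) mu ph ps =
  dual_obj D al ga mu ph ps + \sum_b cs b + (kk D)%:R * ds.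
Proof. by rewrite /dual_obj /alpha_t /gamma_t big_split /=; ring. Qed.

Lemma cstar_le0 b : cs b <= 0.
Proof. by rewrite oppr_le0 negpartE_ge0. Qed.

Lemma cstar_le_cbar b l m : l \in Lb D b -> cs b <= cb b l m.
Proof.
by move=> lLb; apply: oppr_negpartE_fmin_le; apply: allpairs_f; rewrite ?mem_enum.
Qed.

Lemma dstar_le0 : ds <= 0.
Proof. by rewrite oppr_le0 negpartE_ge0. Qed.

Lemma dstar_le_dval l : l \notin \bigcap_b Lb D b -> ds <= dval D al be ga de mu ph ps l.
Proof. by move=> lNLb; apply: oppr_negpartE_fmin_le; apply: map_f; rewrite mem_enum inE. Qed.

Hypothesis LbLp : forall b, Lb D b \subset Lp D.
Hypothesis dual_feas : DRMP_feasible D al be ga de mu ph ps.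

Lemma checkbeta_ge0 b l : 0 <= bt b l.
Proof.
rewrite /checkbeta; case: ifP => [lLb|_]; last exact: negpartE_ge0.
by case: dual_feas => be_ge0 _; apply: be_ge0.
Qed.

Lemma checkdelta_ge0 l : 0 <= dt l.
Proof.
rewrite /checkdelta; case: ifP => [lLp|_]; last exact: pospartE_ge0.
by case: dual_feas => _ [_ [de_ge0 _]]; apply: de_ge0.
Qed.

Lemma lifting_x_cons b l m :
  alpha_t D al be de ph ps b - bt b l + dt l + coef D l m * (ph - ps) <= cost D b l m.
Proof.
rewrite /alpha_t /checkbeta /checkdelta; have := cstar_le0 b.
have cbE : cb b l m = cost D b l m - al b + betabar D be b l - deltabar D de l
  - coef D l m * (ph - ps) by [].
case lLb: (l \in Lb D b).
  have lLp := subsetP (LbLp b) _ lLb.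
  by have := cstar_le_cbar m lLb; rewrite cbE /betabar /deltabar lLb lLp; lra.
have m_in : cb b l m \in [seq cb b l m | m <- index_enum Mt] by rewrite map_f ?mem_index_enum.
case lLp: (l \in Lp D).
  by have := oppr_negpartE_fmin_le m_in; rewrite cbE /betabar /deltabar lLb lLp; lra.
have sub : {subset [seq cb b l m | m <- index_enum Mt] <=
                   [seq cb b l m | b <- index_enum B, m <- index_enum Mt]}.
  by move=> _ /mapP [m' _ ->]; apply: allpairs_f; rewrite mem_index_enum.
by have := pospartE_sub_negpartE_le sub m_in; rewrite cbE /betabar /deltabar lLb lLp; lra.
Qed.

Hypothesis B_gt0 : (0 < #|B|)%N.

(* If [l] lies in every [L(b)] the lifting does not change the [y]-row of [l],
   which is a DRMP row; otherwise [gamma_t] absorbs its violation via [dstar]. *)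
Lemma lifting_y_cons l :
  \sum_b bt b l - gamma_t D al be ga de mu ph ps - dt l + chi D l * mu <= 0.
Proof.
rewrite /gamma_t.
have [lNLb|/negbNE/bigcapP lLb] := boolP (l \notin \bigcap_b Lb D b).
  by have := dstar_le_dval lNLb; rewrite /dval; lra.
have [b0 _] : exists b0, b0 \in B by apply/card_gt0P.
have lLp : l \in Lp D by apply: (subsetP (LbLp b0)); apply: lLb.
have ds_le0 := dstar_le0.
have [_ [_ [_ [_ [_ [_ [_ [y_cons _]]]]]]]] := dual_feas.
have := y_cons l lLp; rewrite /checkdelta lLp big_mkcond /=.
rewrite (eq_bigr (bt^~ l)) => [|b _]; first lra.
by rewrite /checkbeta lLb.
Qed.

Lemma lifting_DMP_feasible :
  DMP_feasible D (alpha_t D al be de ph ps) bt (gamma_t D al be ga de mu ph ps) dt mu ph ps.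
Proof.
have [_ [ga_ge0 [_ [mu_ge0 [ph_ge0 [ps_ge0 [_ [_ mu_le]]]]]]]] := dual_feas.
split; first exact: checkbeta_ge0.
split; first by rewrite /gamma_t subr_ge0 (le_trans dstar_le0).
split; first exact: checkdelta_ge0.
do 3 (split=> //).
by split; [exact: lifting_x_cons | split; [exact: lifting_y_cons |]].
Qed.

End CharacteristicLifting.

Theorem theorem2 (R : realFieldType) (B S Mt Lt : finType)
  (D : data R B S Mt Lt)
  (hB : (0 < #|B|)%N) (hS : (0 < #|S|)%N) (hM : (0 < #|Mt|)%N) (hL : (0 < #|Lt|)%N)
  (hmval : injective (mval D)) (hlot : injective (lot D))
  (hcost : forall b l m, 0 <= cost D b l m)
  (hI : Ilo D <= Ihi D) (hP : 0 < Pen D)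
  (hLpp : Lpp D \subset Lp D) (hLb : forall b, Lb D b \subset Lp D)
  (hMb : forall b l, l \in Lb D b -> Mb D b l != set0)
  (x : B -> Lt -> Mt -> R) (y : Lt -> R) (p : R)
  (al : B -> R) (be : B -> Lt -> R) (ga : R) (de : Lt -> R) (mu ph ps : R)
  (hopt : RMP_optimal D x y p)
  (hdopt : DRMP_optimal D al be ga de mu ph ps) :
  let zRMP := RMP_obj D x p in
  let cs := cstar D al be de ph ps in
  let ds := dstar D al be ga de mu ph ps in
  let bt := checkbeta D al be de ph ps in
  let dt := checkdelta D al be de ph ps in
  let at_ := alpha_t D al be de ph ps in
  let gt := gamma_t D al be ga de mu ph ps in
  DMP_feasible D at_ bt gt dt mu ph ps /\
  dual_obj D at_ gt mu ph ps = zRMP + \sum_(b : B) cs b + (kk D)%:R * ds /\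
  (forall x' y' p', MP_feasible D x' y' p' ->
     zRMP + \sum_(b : B) cs b + (kk D)%:R * ds <= MP_obj D x' p').
Proof.
move=> zRMP cs ds bt dt at_ gt.
have lifting_feas := lifting_DMP_feasible hLb (proj1 hdopt) hB.
have lifting_obj : dual_obj D at_ gt mu ph ps = zRMP + \sum_b cs b + (kk D)%:R * ds.
  by rewrite lifting_dual_obj (rmp_strong_duality hLb hopt hdopt).
split=> //; split=> // x' y' p' xyp'_feas.
by rewrite -lifting_obj; apply: mp_weak_duality xyp'_feas lifting_feas.
Qed.
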